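(* Let $n>1$ and $m\in\mathbb{N}$, let $\mathcal{Q}_m=\bigoplus_{t=0}^mH_t\subseteq H^2(\mathbb{T}^n)$, and let $p=\sum_{|k|=m}a_kz^k\in H_m$ be a homogeneous polynomial of degree $m$ with $\|p\|_2=1$. If $a_k\neq0$ and $a_l\neq0$ for some $k\neq l$ in $\mathbb{Z}_+^n$, then $S_p=P_{\mathcal{Q}_m}T_p|_{\mathcal{Q}_m}$ is not liftable, i.e. there is no $\varphi\in\mathcal{S}(\mathbb{D}^n)$ with $S_p=P_{\mathcal{Q}_m}T_\varphi|_{\mathcal{Q}_m}$.
   Context: $H_t$ is the space of homogeneous polynomials of degree $t$ in $z_1,\dots,z_n$, viewed inside the Hardy space $H^2(\mathbb{T}^n)$ with norm $\|\cdot\|_2$; $|k|=k_1+\dots+k_n$. $T_\varphi f=\varphi f$, $P_{\mathcal{Q}_m}$ the orthogonal projection onto $\mathcal{Q}_m$, $\mathcal{S}(\mathbb{D}^n)$ the closed unit ball of $H^\infty(\mathbb{D}^n)$. *)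

From HB Require Import structures.
From mathcomp Require Import all_boot all_order all_algebra.
From mathcomp Require Import complex.
From mathcomp Require Import Rstruct.
From mathcomp Require Import mpoly.
From Stdlib Require Reals.

Set Implicit Arguments.
Unset Strict Implicit.
Unset Printing Implicit Defensive.

Import Order.TTheory GRing.Theory Num.Theory.
Local Open Scope ring_scope.

Definition CC : Type := complex Rdefinitions.R.

Definition mono (n : nat) (z : 'I_n -> CC) (a : 'X_{1..n}) : CC :=
  \prod_(i < n) z i ^+ a i.

Definition taylor_partial (n : nat) (c : 'X_{1..n} -> CC) (z : 'I_n -> CC)
  (N : nat) : CC :=
  \sum_(a : 'X_{1..n < N}) c (val a) * mono z (val a).

(* c is the Taylor coefficient family of an element of the closed unit ball
   S(D^n) of H^oo(D^n): at every point z of the open polydisc D^n the series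
   sum_a c_a z^a converges absolutely (so it defines a holomorphic function
   phi on D^n, phi(z) = lim_N taylor_partial c z N), and |phi(z)| <= 1,
   i.e. for every eps > 0 the partial sums eventually have modulus <= 1+eps. *)
Definition in_Schur_class (n : nat) (c : 'X_{1..n} -> CC) : Prop :=
  forall z : 'I_n -> CC, (forall i, `|z i| < 1) ->
    (exists B : CC, forall N : nat,
        \sum_(a : 'X_{1..n < N}) `|c (val a) * mono z (val a)| <= B)
    /\ (forall eps : CC, 0 < eps -> exists N0 : nat, forall N : nat,
          (N0 <= N)%N -> `|taylor_partial c z N| <= 1 + eps).

(* f lies in Q_m = H_0 (+) ... (+) H_m, i.e. f is a polynomial of total
   degree <= m. *)
Definition in_Qm (n m : nat) (f : {mpoly CC[n]}) : Prop :=
  forall k, k \in msupp f -> (mdeg k <= m)%N.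

Definition in_Hm (n m : nat) (p : {mpoly CC[n]}) : Prop :=
  forall k, k \in msupp p -> mdeg k = m.

(* Squared H^2(T^n) norm of a polynomial: sum_k |a_k|^2. *)
Definition H2norm2 (n : nat) (p : {mpoly CC[n]}) : CC :=
  \sum_(k <- msupp p) `|p@_k| ^+ 2.

(* Coefficient of z^b in (T_phi f) = phi * f, where phi has Taylor
   coefficients c and f is a polynomial:
   (phi f)_b = sum_{a + g = b} c_a f_g. *)
Definition mul_coef (n : nat) (c : 'X_{1..n} -> CC) (f : {mpoly CC[n]})
  (b : 'X_{1..n}) : CC :=
  \sum_(g <- msupp f) \sum_(a : 'X_{1..n < (mdeg b).+1})
     (if (val a + g)%MM == b then c (val a) * f@_g else 0).

(* P_{Q_m} T_phi |_{Q_m} = P_{Q_m} T_p |_{Q_m}  (as operators on Q_m):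
   for every f in Q_m, the functions phi*f and p*f have the same Fourier
   coefficients of total degree <= m. *)
Definition same_compression (n m : nat) (c : 'X_{1..n} -> CC)
  (p : {mpoly CC[n]}) : Prop :=
  forall f : {mpoly CC[n]}, in_Qm m f ->
    forall b : 'X_{1..n}, (mdeg b <= m)%N -> mul_coef c f b = (p * f)@_b.

(* Comparing the Taylor coefficients of phi * 1 and p * 1 in degrees <= m shows that
   p, being homogeneous of degree m, is the degree-m homogeneous part of phi. A Cauchy
   estimate along the circles lambda |-> phi(lambda r zeta) then gives |p| <= 1 on the
   torus; it is made discrete by averaging over the L-th roots of unity, the aliased
   degrees m + L, m + 2L, ... being controlled by a geometric tail bound as L grows.
   On the grid of M-th roots of unity with M > 2m, the discrete Parseval identity
   sum_j |p(zeta_j)|^2 = M^n ||p||^2 = M^n then forces |p| = 1 at every grid point.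
   Hence the Fourier coefficient of |p|^2 at l0 - k0, for k0 and l0 the largest and the
   smallest monomial of p, vanishes; but it equals p_k0 * conj(p_l0) <> 0. *)

From HB Require Import structures.
From mathcomp Require Import all_boot all_order all_algebra.
From mathcomp Require Import complex Rstruct ssrcomplements mpoly.
From mathcomp Require Import separable cyclotomic cyclic.
From mathcomp Require Import ring lra.
From Stdlib Require Rfunctions.

Set Implicit Arguments.
Unset Strict Implicit.
Unset Printing Implicit Defensive.

Import Order.TTheory GRing.Theory Num.Theory.
Local Open Scope ring_scope.

Local Notation RR := Rdefinitions.R.

Lemma closed_field_prim_root_exists (F : closedFieldType) (L : nat) :
  (0 < L)%N -> L%:R != 0 :> F -> exists w : F, L.-primitive_root w.
Proof.
move=> L_gt0 L_neq0.
have [r Dr] := closed_field_poly_normal ('X^L - 1 : {poly F}).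
rewrite (monicP (monicXnsubC 1 L_gt0)) scale1r in Dr.
have r_roots : all L.-unity_root r by apply/allP=> z; rewrite -root_prod_XsubC -Dr.
have r_uniq : uniq r by rewrite -separable_prod_XsubC -Dr separable_Xn_sub_1.
have r_size : size r = L.
  by apply: succn_inj; rewrite -(size_prod_XsubC r id) -Dr size_XnsubC.
have [w] := hasP (has_prim_root L_gt0 r_roots r_uniq (eq_leq (esym r_size))).
by exists w.
Qed.

Lemma CC_prim_root_exists (L : nat) : (0 < L)%N -> exists w : CC, L.-primitive_root w.
Proof.
by move=> L_gt0; apply: closed_field_prim_root_exists; rewrite // pnatr_eq0 -lt0n.
Qed.

Lemma norm_prim_root (C : numDomainType) (L : nat) (w : C) :
  L.-primitive_root w -> `|w| = 1.
Proof.
move=> w_prim; apply/eqP; rewrite -(pexpr_eq1 (prim_order_gt0 w_prim)) //.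
by rewrite -normrX (prim_expr_order w_prim) normr1.
Qed.

Lemma sum_expr_unity_root (R : idomainType) (L : nat) (x : R) :
  x ^+ L = 1 -> \sum_(t < L) x ^+ t = if x == 1 then L%:R else 0.
Proof.
move=> xL; have [->|x_neq1] := eqVneq x 1.
  by rewrite (eq_bigr (fun _ => 1)) ?sumr_const ?card_ord // => t _; rewrite expr1n.
have : (x - 1) * \sum_(t < L) x ^+ t = 0 by rewrite -subrX1 xL subrr.
by move/eqP; rewrite mulf_eq0 subr_eq0 (negbTE x_neq1) => /eqP.
Qed.

Lemma sum_prim_root_ratio (F : fieldType) (L A B : nat) (w : F) :
  L.-primitive_root w ->
  \sum_(t < L) (w ^+ A / w ^+ B) ^+ t = if A == B %[mod L] then L%:R else 0.
Proof.
move=> w_prim.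
have w_neq0 : w != 0 by rewrite (prim_root_eq0 w_prim) -lt0n (prim_order_gt0 w_prim).
have wB_neq0 := expf_neq0 B w_neq0.
rewrite sum_expr_unity_root; last first.
  by rewrite expr_div_n -!exprM !(mulnC _ L) !exprM (prim_expr_order w_prim) !expr1n divr1.
rewrite -(eq_prim_root_expr w_prim) -[X in _ == X](divff wB_neq0).
by rewrite (inj_eq (mulIf (invr_neq0 wB_neq0))).
Qed.

Lemma sum_root_filter (F : fieldType) (I : finType) (L m : nat) (w : F)
    (T : I -> F) (d : I -> nat) :
  L.-primitive_root w ->
  \sum_(j < L) (\sum_a T a * (w ^+ j) ^+ d a) / (w ^+ j) ^+ m
  = L%:R * \sum_(a | d a == m %[mod L]) T a.
Proof.
move=> w_prim.
rewrite (eq_bigr (fun j : 'I_L => \sum_a T a * (w ^+ d a / w ^+ m) ^+ j)); last first.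
  move=> j _; rewrite mulr_suml; apply: eq_bigr => a _.
  by rewrite -mulrA expr_div_n -!exprM !(mulnC j).
rewrite exchange_big mulr_sumr [RHS]big_mkcond; apply: eq_bigr => a _.
by rewrite -mulr_sumr sum_prim_root_ratio //; case: ifP; rewrite ?mulr0 // mulrC.
Qed.

Lemma norm_root_filter_le (C : numFieldType) (I : finType) (L m : nat) (w : C)
    (T : I -> C) (d : I -> nat) (K : C) :
  L.-primitive_root w ->
  (forall j : 'I_L, `|\sum_a T a * (w ^+ j) ^+ d a| <= K) ->
  `|\sum_(a | d a == m %[mod L]) T a| <= K.
Proof.
move=> w_prim bounded.
have L_gt0 : 0 < L%:R :> C by rewrite ltr0n (prim_order_gt0 w_prim).
rewrite -(ler_pM2l L_gt0) -[L%:R in X in X <= _]normr_nat -normrM.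
rewrite -(@sum_root_filter _ _ L m w T d w_prim).
rewrite mulr_natl -[X in K *+ X]card_ord -sumr_const.
apply: le_trans (ler_norm_sum _ _ _) _; apply: ler_sum => j _.
by rewrite normrM normfV !normrX (norm_prim_root w_prim) !expr1n invr1 mulr1.
Qed.

Lemma sum_delta_seq (R : nmodType) (T : eqType) (s : seq T) (x : T) (F : T -> R) :
  uniq s -> x \in s -> \sum_(y <- s) F y *+ (y == x) = F x.
Proof.
move=> s_uniq xs; rewrite (bigD1_seq x) //= eqxx mulr1n big1 ?addr0 //.
by move=> y /negbTE ->; rewrite mulr0n.
Qed.

Lemma mem_bigmin_seq (d : Order.disp_t) (T : orderType d) (s : seq T) (x : T) :
  x \in s -> \big[Order.min/x]_(y <- s) y \in s.
Proof.
move=> xs; rewrite big_seq; elim/big_rec: _ => // y z ys zs.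
by rewrite /Order.min; case: ifP.
Qed.

Lemma eventually_forall_fin (I : finType) (P : I -> nat -> Prop) :
  (forall i, exists N0, forall N, (N0 <= N)%N -> P i N) ->
  exists N0, forall i N, (N0 <= N)%N -> P i N.
Proof.
move=> ev.
suff [N0 PN0] : exists N0, forall i, i \in enum I -> forall N, (N0 <= N)%N -> P i N.
  by exists N0 => i; apply: PN0; rewrite mem_enum.
elim: (enum I) => [|i s [N1 PN1]]; first by exists 0%N.
have [N2 PN2] := ev i.
exists (maxn N1 N2) => k; rewrite inE => /predU1P[->|k_s] N.
  by rewrite geq_max => /andP[_]; apply: PN2.
by rewrite geq_max => /andP[N1N _]; apply: PN1.
Qed.

Lemma leq_of_eqn_mod (L m d : nat) :
  (m < L)%N -> d = m %[mod L] -> d != m -> (L <= d)%N.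
Proof.
move=> mL dm d_neq_m; have [d_lt_m|m_le_d] := ltnP d m.
  by move: dm; rewrite !modn_small ?(ltn_trans d_lt_m mL) // => /eqP; rewrite (negbTE d_neq_m).
move/eqP: dm; rewrite eqn_mod_dvd // => /dvdn_leq.
rewrite subn_gt0 ltn_neqAle eq_sym d_neq_m m_le_d => /(_ isT) L_le.
exact: leq_trans L_le (leq_subr _ _).
Qed.

Lemma bernoulli_sub (R : realFieldType) (h : R) (m : nat) :
  0 <= h <= 1 -> 1 - m%:R * h <= (1 - h) ^+ m.
Proof.
move=> /andP[h0 h1]; elim: m => [|m IH]; first by rewrite mul0r subr0 expr0.
rewrite exprS -natr1.
have : (1 - h) * (1 - m%:R * h) <= (1 - h) * (1 - h) ^+ m by rewrite ler_wpM2l ?subr_ge0.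
have : 0 <= m%:R * h by rewrite mulr_ge0.
nra.
Qed.

Lemma ler1_of_expr_le1 (R : realFieldType) (m : nat) (a : R) :
  (forall r, 0 < r < 1 -> r ^+ m * a <= 1) -> a <= 1.
Proof.
move=> bounded; rewrite leNgt; apply/negP => a_gt1.
have a_gt0 : 0 < a by apply: lt_trans a_gt1.
have m_ge0 : 0 <= m%:R :> R by [].
set h := (a - 1) / (a * (m%:R + 1)).
have h_gt0 : 0 < h by rewrite divr_gt0 ?mulr_gt0 ?subr_gt0 // ltr_wpDl.
have h_lt1 : h < 1.
  rewrite ltr_pdivrMr ?mulr_gt0 ?ltr_wpDl // mul1r mulrDr mulr1; nra.
have := bounded (1 - h); rewrite subr_gt0 h_lt1 ltrBlDr ltrDl h_gt0 => /(_ isT).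
have h01 : 0 <= h <= 1 by rewrite !ltW.
have := ler_wpM2r (ltW a_gt0) (bernoulli_sub m h01).
have : (1 - m%:R * h) * a - 1 = (a - 1) / (m%:R + 1).
  by rewrite /h; field; rewrite !gt_eqF ?ltr_wpDl.
have : 0 < (a - 1) / (m%:R + 1) by rewrite divr_gt0 ?subr_gt0 ?ltr_wpDl.
lra.
Qed.

Lemma ler1_of_geometric_tail (x q B : RR) (m : nat) : 0 <= q < 1 ->
  (forall eps L, 0 < eps -> (m < L)%N -> x <= 1 + eps + q ^+ L * B) -> x <= 1.
Proof.
move=> /andP[q0 q1] tail; apply/ler_addgt0Pr => e e0.
have e2 : 0 < e / 2 by rewrite divr_gt0.
have eB : 0 < e / 2 / (`|B| + 1) by rewrite divr_gt0 // ltr_wpDl.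
have q_abs : Rdefinitions.Rlt (Rbasic_fun.Rabs q) 1.
  by rewrite RabsE; apply/RltP; rewrite ger0_norm.
have [L0 qL_small] := Rfunctions.pow_lt_1_zero _ q_abs _ (RltP eB).
set L := maxn L0 m.+1.
have L0_le : (L0 <= L)%N by rewrite leq_max leqnn.
have mL : (m < L)%N by rewrite leq_max leqnn orbT.
have qL : `|q ^+ L| < e / 2 / (`|B| + 1).
  by have /RltP := qL_small L (ssrnat.leP L0_le); rewrite RabsE RpowE.
have qLB : q ^+ L * B <= e / 2.
  have : `|q ^+ L| * (`|B| + 1) <= e / 2 by rewrite -ler_pdivlMr ?ltr_wpDl // ltW.
  have := ler_norm (q ^+ L * B); rewrite normrM.
  have := normr_ge0 (q ^+ L).
  nra.
have := tail (e / 2) L e2 mL; lra.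
Qed.

Lemma eqm_add_extreme (n : nat) (a b k l : 'X_{1..n}) :
  (a <= k)%O -> (l <= b)%O -> ((a + l)%MM == (b + k)%MM) = (a == k) && (b == l).
Proof.
move=> a_le_k l_le_b; have [->|a_neq_k] := eqVneq a k.
  by rewrite addmC eqm_add2r eq_sym.
apply: lt_eqF; apply: (@lt_le_trans _ _ (k + l)%MM).
  by rewrite ltmc_add2l lt_neqAle a_neq_k.
by rewrite [(b + k)%MM]addmC lemc_add2r.
Qed.

Lemma msupp_extremes (R : nzRingType) (n : nat) (p : {mpoly R[n]}) (k l : 'X_{1..n}) :
  k != l -> p@_k != 0 -> p@_l != 0 ->
  exists k0 l0, [/\ k0 \in msupp p, l0 \in msupp p, l0 != k0
                  & {in msupp p, forall a, (l0 <= a)%O && (a <= k0)%O}].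
Proof.
move=> k_neq_l pk pl.
have k_s : k \in msupp p by rewrite mcoeff_msupp.
have l_s : l \in msupp p by rewrite mcoeff_msupp.
have p_neq0 : p != 0 by apply: contraNneq pk => ->; rewrite mcoeff0.
exists (mlead p), (\big[Order.min/k]_(a <- msupp p) a).
have between : {in msupp p, forall a,
    (\big[Order.min/k]_(a <- msupp p) a <= a)%O && (a <= mlead p)%O}.
  by move=> a a_s; rewrite msupp_le_mlead // andbT; exact: ge_bigmin_seq.
split=> //; [exact: mlead_supp | exact: mem_bigmin_seq |].
apply: contraNneq k_neq_l => min_eq_lead.
have eq_lead a : a \in msupp p -> a = mlead p.
  by move=> a_s; apply/le_anti; rewrite -{2}min_eq_lead andbC between.
by rewrite (eq_lead k k_s) (eq_lead l l_s).
Qed.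

Lemma sum_pairs_addm_extreme (R : nmodType) (n : nat) (s : seq 'X_{1..n})
    (F : 'X_{1..n} -> 'X_{1..n} -> R) (k0 l0 : 'X_{1..n}) :
  uniq s -> k0 \in s -> l0 \in s -> {in s, forall a, (l0 <= a)%O && (a <= k0)%O} ->
  \sum_(a <- s) \sum_(b <- s) F a b *+ ((a + l0)%MM == (b + k0)%MM) = F k0 l0.
Proof.
move=> s_uniq k0_s l0_s between.
have pair_eq a b : a \in s -> b \in s ->
    ((a + l0)%MM == (b + k0)%MM) = (a == k0) && (b == l0).
  move=> a_s b_s; case/andP: (between a a_s) => _ a_le; case/andP: (between b b_s) => b_ge _.
  exact: eqm_add_extreme.
rewrite (eq_big_seq (fun a => F a l0 *+ (a == k0))) ?sum_delta_seq // => a a_s.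
by under eq_big_seq => b b_s do rewrite pair_eq // -mulnb mulrnA; rewrite sum_delta_seq.
Qed.

Section Monomials.
Variable n : nat.
Implicit Types (z : 'I_n -> CC) (a b : 'X_{1..n}).

Lemma mono0 z : mono z 0%MM = 1.
Proof. by rewrite /mono big1 // => i _; rewrite mnm0E expr0. Qed.

Lemma monoD z a b : mono z (a + b)%MM = mono z a * mono z b.
Proof. by rewrite /mono -big_split; apply: eq_bigr => i _; rewrite mnmDE exprD. Qed.

Lemma mono_scale (x : CC) z a :
  mono (fun i => x * z i) a = x ^+ mdeg a * mono z a.
Proof.
by rewrite /mono (eq_bigr _ (fun i _ => exprMn _ _ _)) big_split prodrXr -mdegE.
Qed.

Lemma norm_mono_torus z a : (forall i, `|z i| = 1) -> `|mono z a| = 1.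
Proof. by move=> z1; rewrite /mono normr_prod big1 // => i _; rewrite normrX z1 expr1n. Qed.

Lemma conj_mono_torus z a : (forall i, `|z i| = 1) -> (mono z a)^* = (mono z a)^-1.
Proof. by move=> z1; rewrite invC_norm norm_mono_torus // expr1n invr1 mul1r. Qed.

Lemma leq_mnm_mdeg a i : (a i <= mdeg a)%N.
Proof. by rewrite mdegE (bigD1 i) //= leq_addr. Qed.

End Monomials.

Lemma meval_sum_bmnm (n N : nat) (p : {mpoly CC[n]}) (z : 'I_n -> CC) :
  (forall a, a \in msupp p -> (mdeg a < N)%N) ->
  p.@[z] = \sum_(a : 'X_{1..n < N}) p@_a * mono z a.
Proof.
move=> small; rewrite mevalE (big_mksub 'X_{1..n < N}) ?msupp_uniq //=.
by rewrite big_rmcond //= => a /memN_msupp_eq0 ->; rewrite mul0r.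
Qed.

Definition grid_pt (n M : nat) (w : CC) (j : {ffun 'I_n -> 'I_M}) : 'I_n -> CC :=
  fun i => w ^+ j i.

Section Grid.
Variables (n M : nat) (w : CC).
Hypothesis w_prim : M.-primitive_root w.
Local Notation grid := {ffun 'I_n -> 'I_M}.
Local Notation zeta := (grid_pt w).

Lemma grid_pt_torus (j : grid) i : `|zeta j i| = 1.
Proof. by rewrite normrX (norm_prim_root w_prim) expr1n. Qed.

Lemma sum_grid_mono_ratio (u v : 'X_{1..n}) :
  (forall i, u i < M)%N -> (forall i, v i < M)%N ->
  \sum_(j : grid) mono (zeta j) u / mono (zeta j) v = M%:R ^+ n *+ (u == v).
Proof.
move=> u_lt v_lt.
have factor (j : grid) : mono (zeta j) u / mono (zeta j) v
    = \prod_i (w ^+ u i / w ^+ v i) ^+ j i.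
  rewrite /mono -prodfV -big_split; apply: eq_bigr => i _.
  by rewrite expr_div_n /grid_pt -!exprM !(mulnC (j i)).
rewrite (eq_bigr _ (fun j _ => factor j)).
rewrite -(bigA_distr_bigA (fun i (t : 'I_M) => (w ^+ u i / w ^+ v i) ^+ t)) /=.
rewrite (eq_bigr (fun i => M%:R *+ (u i == v i))); last first.
  by move=> i _; rewrite sum_prim_root_ratio // !modn_small //; case: eqP.
have [->|u_neq_v] := eqVneq u v.
  by rewrite (eq_bigr (fun _ => M%:R)) ?prodr_const ?card_ord // => i _; rewrite eqxx.
have [i ui_neq] : exists i, u i != v i.
  case: (pickP (fun i => u i != v i)) => [i|uv]; first by exists i.
  by case/eqP: u_neq_v; apply/mnmP => i; apply/eqP/negbFE/uv.
by rewrite (bigD1 i) //= (negbTE ui_neq) mulr0n mul0r.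
Qed.

Lemma sum_grid_sqr_norm_eval (p : {mpoly CC[n]}) (u v : 'X_{1..n}) :
  (forall a i, a \in msupp p -> ((a + u)%MM i < M)%N /\ ((a + v)%MM i < M)%N) ->
  \sum_(j : grid) `|p.@[zeta j]| ^+ 2 * (mono (zeta j) u / mono (zeta j) v)
  = M%:R ^+ n * \sum_(a <- msupp p) \sum_(b <- msupp p)
                  p@_a * (p@_b)^* *+ ((a + u)%MM == (b + v)%MM).
Proof.
move=> small.
have sqr_expand (j : grid) : `|p.@[zeta j]| ^+ 2 * (mono (zeta j) u / mono (zeta j) v)
    = \sum_(a <- msupp p) \sum_(b <- msupp p) p@_a * (p@_b)^*
        * (mono (zeta j) (a + u)%MM / mono (zeta j) (b + v)%MM).
  rewrite normCK mevalE rmorph_sum !mulr_suml; apply: eq_bigr => a _.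
  rewrite !mulr_sumr mulr_suml; apply: eq_bigr => b _.
  rewrite rmorphM /= -[\prod_i _ ^+ b i]/(mono _ b) conj_mono_torus; last exact: grid_pt_torus.
  by rewrite !monoD !invfM /mono; ring.
rewrite (eq_bigr _ (fun j _ => sqr_expand j)) exchange_big mulr_sumr.
apply: eq_big_seq => a a_supp; rewrite exchange_big mulr_sumr.
apply: eq_big_seq => b b_supp; rewrite -mulr_sumr sum_grid_mono_ratio.
- by rewrite !mulrnAr mulrC.
- by move=> i; case: (small a i a_supp).
- by move=> i; case: (small b i b_supp).
Qed.

Lemma sum_grid_sqr_norm_eval_H2 (p : {mpoly CC[n]}) :
  (forall a i, a \in msupp p -> (a i < M)%N) ->
  \sum_(j : grid) `|p.@[zeta j]| ^+ 2 = M%:R ^+ n * H2norm2 p.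
Proof.
move=> small.
rewrite (eq_bigr (fun j => `|p.@[zeta j]| ^+ 2 * (mono (zeta j) 0 / mono (zeta j) 0))); last first.
  by move=> j _; rewrite mono0 divr1 mulr1.
rewrite sum_grid_sqr_norm_eval => [|a i a_supp]; last by rewrite addm0 small.
congr (_ * _); apply: eq_big_seq => a a_supp; rewrite normCK.
by under eq_bigr do rewrite !addm0 eq_sym; rewrite sum_delta_seq ?msupp_uniq.
Qed.

Lemma grid_norm_eval_eq1 (p : {mpoly CC[n]}) :
  (forall a i, a \in msupp p -> (a i < M)%N) -> H2norm2 p = 1 ->
  (forall j : grid, `|p.@[zeta j]| <= 1) -> forall j : grid, `|p.@[zeta j]| = 1.
Proof.
move=> small p_norm bounded.
have defect0 : \sum_(j : grid) (1 - `|p.@[zeta j]| ^+ 2) = 0.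
  rewrite sumrB sum_grid_sqr_norm_eval_H2 // p_norm mulr1 sumr_const card_ffun !card_ord.
  by rewrite natrX subrr.
move=> j; apply/eqP; rewrite -(pexpr_eq1 (n := 2)) //; apply/eqP.
apply/esym/eqP; rewrite -subr_eq0; apply/eqP; move/psumr_eq0P: defect0; apply=> // i _.
by rewrite subr_ge0 exprn_ile1.
Qed.

Lemma grid_norm_eval_not_le1 (m : nat) (p : {mpoly CC[n]}) :
  (m.*2 < M)%N -> in_Qm m p -> H2norm2 p = 1 ->
  (exists k l : 'X_{1..n}, [/\ k != l, p@_k != 0 & p@_l != 0]) ->
  ~ (forall j : grid, `|p.@[zeta j]| <= 1).
Proof.
move=> mM p_Qm p_norm [k [l [k_neq_l pk pl]]] bounded.
have small (a : 'X_{1..n}) i : (mdeg a <= m.*2)%N -> (a i < M)%N.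
  by move=> a_le; apply: leq_ltn_trans mM; apply: leq_trans a_le; exact: leq_mnm_mdeg.
have small1 a i : a \in msupp p -> (a i < M)%N.
  by move=> a_s; apply: small; rewrite -addnn (leq_trans (p_Qm a a_s)) ?leq_addr.
have small2 a b i : a \in msupp p -> b \in msupp p -> ((a + b)%MM i < M)%N.
  by move=> a_s b_s; apply: small; rewrite mdegD -addnn leq_add ?p_Qm.
have unimod := grid_norm_eval_eq1 small1 p_norm bounded.
have [k0 [l0 [k0_s l0_s l0_neq_k0 between]]] := msupp_extremes k_neq_l pk pl.
have := @sum_grid_sqr_norm_eval p l0 k0
  (fun a i a_s => conj (small2 a l0 i a_s l0_s) (small2 a k0 i a_s k0_s)).
rewrite (eq_bigr (fun j => mono (zeta j) l0 / mono (zeta j) k0)); last first.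
  by move=> j _; rewrite unimod expr1n mul1r.
rewrite sum_grid_mono_ratio => [|i|i]; last 2 first.
- exact: small1.
- exact: small1.
rewrite (negbTE l0_neq_k0) mulr0n sum_pairs_addm_extreme ?msupp_uniq //.
move/esym/eqP; apply/negP; rewrite !mulf_neq0 // ?conjC_eq0 -?mcoeff_msupp //.
by rewrite expf_neq0 // pnatr_eq0 -lt0n (prim_order_gt0 w_prim).
Qed.

End Grid.

Lemma same_compression_coef (n m : nat) (c : 'X_{1..n} -> CC) (p : {mpoly CC[n]}) :
  same_compression m c p -> forall b, (mdeg b <= m)%N -> c b = p@_b.
Proof.
move=> compr b b_le.
have one_Qm : in_Qm m (1 : {mpoly CC[n]}).
  by move=> k; rewrite msupp1 inE => /eqP ->; rewrite mdeg0.
have := compr 1 one_Qm b b_le; rewrite mulr1 /mul_coef msupp1 big_seq1 => <-.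
rewrite (bigD1 (BMultinom (ltnSn (mdeg b)))) //= addm0 eqxx mcoeff1 eqxx mulr1.
rewrite big1 ?addr0 // => a a_neq; rewrite addm0; case: eqP => // a_b.
by case/eqP: a_neq; apply: val_inj.
Qed.

Lemma taylor_partial_dilate (n N : nat) (c : 'X_{1..n} -> CC) (zeta : 'I_n -> CC)
    (x : CC) :
  taylor_partial c (fun i => x * zeta i) N
  = \sum_(a : 'X_{1..n < N}) c (val a) * mono zeta (val a) * x ^+ mdeg (val a).
Proof. by apply: eq_bigr => a _; rewrite mono_scale [_ * mono _ _]mulrC mulrA. Qed.

Lemma norm_taylor_tail_le (n N L : nat) (c : 'X_{1..n} -> CC) (zeta : 'I_n -> CC)
    (q r B : CC) (P : pred 'X_{1..n < N}) :
  (forall i, `|zeta i| = 1) -> 0 <= q <= 1 -> 0 <= r ->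
  (forall a, P a -> (L <= mdeg (val a))%N) ->
  \sum_(a : 'X_{1..n < N}) `|c (val a) * mono (fun i => r * zeta i) (val a)| <= B ->
  `|\sum_(a | P a) c (val a) * mono zeta (val a) * (q * r) ^+ mdeg (val a)| <= q ^+ L * B.
Proof.
move=> zeta1 /andP[q0 q1] r0 high B_bound.
apply: le_trans (ler_norm_sum _ _ _) _.
apply: le_trans (ler_wpM2l (exprn_ge0 L q0) B_bound); rewrite mulr_sumr big_mkcond.
apply: ler_sum => a _; case: ifPn => [/high L_le|_]; last by rewrite mulr_ge0 ?exprn_ge0.
rewrite mono_scale !(normrM, normrX) norm_mono_torus // (ger0_norm q0) (ger0_norm r0).
rewrite exprMn !mulr1 mulrCA; apply: ler_wpM2r; last exact: ler_wiXn2l.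
by rewrite mulr_ge0 ?exprn_ge0.
Qed.

Lemma cauchy_estimate (n m : nat) (c : 'X_{1..n} -> CC) (p : {mpoly CC[n]})
    (zeta : 'I_n -> CC) (q r B eps : CC) (L : nat) :
  in_Schur_class c -> (forall b, (mdeg b <= m)%N -> c b = p@_b) -> in_Hm m p ->
  (forall i, `|zeta i| = 1) -> 0 <= q <= 1 -> 0 <= r < 1 ->
  (forall N, \sum_(a : 'X_{1..n < N}) `|c (val a) * mono (fun i => r * zeta i) (val a)| <= B) ->
  0 < eps -> (m < L)%N ->
  (q * r) ^+ m * `|p.@[zeta]| <= 1 + eps + q ^+ L * B.
Proof.
move=> c_schur c_p p_Hm zeta1 q01 /andP[r0 r1] B_bound eps0 mL.
have s0 : 0 <= q * r by case/andP: q01 => q0 _; rewrite mulr_ge0.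
have s1 : q * r < 1 by case/andP: q01 => _ q1; apply: le_lt_trans r1; rewrite ler_piMl.
have [w w_prim] := CC_prim_root_exists (leq_ltn_trans (leq0n m) mL).
have in_disc (j : 'I_L) i : `|(q * r * w ^+ j) * zeta i| < 1.
  by rewrite normrM zeta1 mulr1 normrM normrX (norm_prim_root w_prim) expr1n mulr1 ger0_norm.
have [N0 partial_le] : exists N0, forall (j : 'I_L) N, (N0 <= N)%N ->
    `|taylor_partial c (fun i => (q * r * w ^+ j) * zeta i) N| <= 1 + eps.
  by apply: eventually_forall_fin => j; have [_ /(_ eps eps0)] := c_schur _ (in_disc j).
set N := maxn N0 m.+1.
pose T (a : 'X_{1..n < N}) := c (val a) * mono zeta (val a) * (q * r) ^+ mdeg (val a).
have filtered : `|\sum_(a | mdeg (val a) == m %[mod L]) T a| <= 1 + eps.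
  apply: (norm_root_filter_le _ w_prim) => j.
  have -> : \sum_a T a * (w ^+ j) ^+ mdeg (val a)
      = taylor_partial c (fun i => (q * r * w ^+ j) * zeta i) N.
    by rewrite taylor_partial_dilate; apply: eq_bigr => a _; rewrite exprMn mulrA.
  by apply: partial_le; rewrite leq_max leqnn.
have deg_m : \sum_(a | mdeg (val a) == m) T a = (q * r) ^+ m * p.@[zeta].
  rewrite (meval_sum_bmnm (N := N)) => [|a a_s]; last by rewrite (p_Hm a a_s) leq_max ltnSn orbT.
  rewrite mulr_sumr big_mkcond; apply: eq_bigr => a _ /=.
  have [deg_a|deg_a] := eqVneq (mdeg (val a)) m; first by rewrite /T c_p deg_a // mulrC.
  by rewrite memN_msupp_eq0 ?mul0r ?mulr0 //; apply: contra deg_a => /p_Hm ->.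
have tail : `|\sum_(a | (mdeg (val a) == m %[mod L]) && (mdeg (val a) != m)) T a| <= q ^+ L * B.
  apply: norm_taylor_tail_le => // a /andP[/eqP a_mod a_neq].
  exact: leq_of_eqn_mod mL a_mod a_neq.
have split_deg_m : \sum_(a | mdeg (val a) == m %[mod L]) T a
    = \sum_(a | mdeg (val a) == m) T a
      + \sum_(a | (mdeg (val a) == m %[mod L]) && (mdeg (val a) != m)) T a.
  rewrite (bigID (fun a : 'X_{1..n < N} => mdeg (val a) == m)) /=; congr (_ + _).
  by apply: eq_bigl => a; case: (eqVneq (mdeg (val a)) m) => [->|_]; rewrite ?eqxx ?andbF.
rewrite -(ger0_norm (exprn_ge0 m s0)) -normrM -deg_m.
move/eqP: split_deg_m; rewrite -subr_eq => /eqP <-.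
exact: le_trans (ler_normB _ _) (lerD filtered tail).
Qed.

Section TorusBound.
Local Open Scope complex_scope.
Local Notation toC := (real_complex RR).

Lemma norm_eval_torus_le1 (n m : nat) (c : 'X_{1..n} -> CC) (p : {mpoly CC[n]})
    (zeta : 'I_n -> CC) :
  in_Schur_class c -> (forall b, (mdeg b <= m)%N -> c b = p@_b) -> in_Hm m p ->
  (forall i, `|zeta i| = 1) -> `|p.@[zeta]| <= 1.
Proof.
move=> c_schur c_p p_Hm zeta1.
have [a a_def] : exists a : RR, `|p.@[zeta]| = a%:C by apply/complex_realP; exact: normr_real.
rewrite a_def -(rmorph1 toC) lecR.
apply: (@ler1_of_expr_le1 _ m) => r /andP[r0 r1].
set r' := (r + 1) / 2.
have r_lt_r' : r < r' by rewrite /r'; lra.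
have r'_lt1 : r' < 1 by rewrite /r'; lra.
have r'0 : 0 < r' by rewrite /r'; lra.
have in_disc i : `|r'%:C * zeta i| < 1.
  by rewrite normrM zeta1 mulr1 ger0_norm ?ler0c ?(ltW r'0) // -(rmorph1 toC) ltcR.
have [[B B_bound] _] := c_schur _ in_disc.
have [b B_def] : exists b : RR, B = b%:C.
  by apply/complex_realP; apply: ger0_real; apply: le_trans (B_bound 0%N); exact: sumr_ge0.
rewrite {B}B_def in B_bound.
have q0 : 0 <= r / r' by apply: divr_ge0; lra.
have q01 : 0 <= r / r' <= 1 by rewrite q0 ler_pdivrMr // mul1r ltW.
have qE : r / r' * r' = r by rewrite divfK ?gt_eqF.
apply: (@ler1_of_geometric_tail _ (r / r') b m) => [|eps L eps0 mL].
  by rewrite q0 ltr_pdivrMr // mul1r.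
move: (r / r') q01 qE => q q01 <-.
have q01C : 0 <= q%:C <= 1 by rewrite ler0c -(rmorph1 toC) lecR.
have r'01C : 0 <= r'%:C < 1.
  by rewrite ler0c ltW //= -(rmorph1 toC) ltcR.
have eps0C : 0 < eps%:C by rewrite ltcR.
have := cauchy_estimate c_schur c_p p_Hm zeta1 q01C r'01C B_bound eps0C mL.
rewrite a_def -(rmorph1 toC) -!(rmorphM toC).
rewrite -!(rmorphXn toC) -!(rmorphM toC).
by rewrite -!(rmorphD toC) lecR.
Qed.

End TorusBound.

Theorem corollary3p3 (n m : nat) (p : {mpoly CC[n]}) :
  (1 < n)%N ->
  in_Hm m p ->
  H2norm2 p = 1 ->
  (exists k l : 'X_{1..n}, [/\ k != l, p@_k != 0 & p@_l != 0]) ->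
  ~ (exists c : 'X_{1..n} -> CC, in_Schur_class c /\ same_compression m c p).
Proof.
move=> _ p_Hm p_norm two_coefs [c [c_schur c_p]].
have [w w_prim] := CC_prim_root_exists (ltn0Sn m.*2).
apply: (grid_norm_eval_not_le1 w_prim (ltnSn _) _ p_norm two_coefs) => [k /p_Hm -> //|j].
exact: norm_eval_torus_le1 c_schur (same_compression_coef c_p) p_Hm (grid_pt_torus w_prim j).
Qed.
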